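(* Let $\kappa\ge 1$ and $n\ge 1$ be integers, let $0\le\epsilon<1$, and let $q=(q_0,\dots,q_{2^\kappa-1})\in\mathbb{R}^{2^\kappa}$ satisfy $q_i\ge 0$ for all $i$ and $\sum_{i=0}^{2^\kappa-1}q_i=1$. Then for every subspace $S$ of $W=\mathbb{F}_2^\kappa$, $\psi(S,n,\epsilon,q)\ge 0$.
   Context: $W=\mathbb{F}_2^\kappa$. For $i\in\{0,\dots,2^\kappa-1\}$, $\nu(i)\in W$ denotes the binary expansion of $i$. For a subspace $S\subseteq W$ and $q\in\mathbb{R}^{2^\kappa}$ (indexed from $0$), $\zeta(S,q)=\sum_{i:\nu(i)\in S}q_i$. For a subspace $S$ and integer $d$, $\Xi(S,d)$ is the set of all $d$-dimensional subspaces of $S$. Define $\phi(S,n,\epsilon,q)=\epsilon^{n(1-\zeta(S,q))}$ (with the convention $0^0=1$), and define $\psi$ recursively on the dimension $d$ of $S$ by $\psi(S,n,\epsilon,q)=\phi(S,n,\epsilon,q)-\sum_{i=0}^{d-1}\sum_{T\in\Xi(S,i)}\psi(T,n,\epsilon,q)$ (so for $d=0$, $\psi(\{0\})=\phi(\{0\})$). *)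

From HB Require Import structures.
From mathcomp Require Import all_boot all_order all_algebra.
From mathcomp Require Import reals exp.
Set Implicit Arguments. Unset Strict Implicit. Unset Printing Implicit Defensive.
Import Order.TTheory GRing.Theory Num.Theory.
Local Open Scope ring_scope.

Notation W k := 'rV['F_2]_k.

(* Subspaces of W are represented as finite sets that equal their own span;
   this makes "the set of all subspaces" a finite type to sum over. *)
Definition span_of k (A : {set W k}) : {vspace W k} := <<enum A>>%VS.
Definition is_subspace k (A : {set W k}) : bool :=
  [set x | x \in span_of A] == A.
Definition sdim k (A : {set W k}) : nat := \dim (span_of A).

(* nu(i) : binary expansion of i; coordinate j is bit j of i (least significant first). *)
Definition nu k (i : nat) : W k := \row_(j < k) ((odd (i %/ 2 ^ j))%:R : 'F_2).

Section Psi.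
Variables (R : realType) (k : nat) (n : nat) (eps : R) (q : 'I_(2 ^ k) -> R).

Definition zeta (S : {set W k}) : R := \sum_(i < 2 ^ k | nu k i \in S) q i.

(* phi = eps^(n (1 - zeta)); powR has 0 `^ 0 = 1. *)
Definition phi (S : {set W k}) : R := powR eps (n%:R * (1 - zeta S)).

(* psi with a fuel argument; psi S uses fuel sdim S, which suffices since every
   recursive call is on a subspace of strictly smaller dimension. *)
Fixpoint psi_fuel (f : nat) (S : {set W k}) : R :=
  match f with
  | 0 => phi S
  | f'.+1 => phi S - \sum_(i < sdim S)
                \sum_(T : {set W k} | is_subspace T && (sdim T == i) && (T \subset S))
                   psi_fuel f' T
  end.

Definition psi (S : {set W k}) : R := psi_fuel (sdim S) S.
End Psi.

(* Put a_x := eps^(n q_x), where q_x is the total mass of the indices i with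
   nu(i) = x, so that phi(T) = prod_(x notin T) a_x. Expanding
   prod_x ((1 - a_x)[x in T] + a_x) writes this product as the sum, over all
   sets Y included in T, of the nonnegative weights
   w(Y) = prod_(x in Y) (1 - a_x) prod_(x notin Y) a_x. Grouping the Y by their
   span gives phi(T) = sum_(U <= T) g(U) with g(U) the total weight of the sets
   spanning U, and this is exactly the recursion defining psi: hence
   psi(T) = g(T) >= 0. *)
From HB Require Import structures.
From mathcomp Require Import all_boot all_order all_algebra.
From mathcomp Require Import reals exp.
Import Order.TTheory GRing.Theory Num.Theory.
Set Implicit Arguments. Unset Strict Implicit.
Local Open Scope ring_scope.

Definition span_set k (Y : {set W k}) : {set W k} := [set x | x \in span_of Y].

Lemma span_of_span_set k (Y : {set W k}) : span_of (span_set Y) = span_of Y.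
Proof.
apply/subv_anti/andP; split; apply/span_subvP => x.
- by rewrite mem_enum inE.
- rewrite mem_enum => xY; apply: memv_span; rewrite mem_enum inE.
  by apply: memv_span; rewrite mem_enum.
Qed.

Lemma span_set_subspace k (Y : {set W k}) : is_subspace (span_set Y).
Proof. by rewrite /is_subspace span_of_span_set. Qed.

Lemma sub_span_set k (Y : {set W k}) : Y \subset span_set Y.
Proof. by apply/subsetP => x xY; rewrite inE; apply: memv_span; rewrite mem_enum. Qed.

Lemma span_set_sub k (Y T : {set W k}) :
  is_subspace T -> (span_set Y \subset T) = (Y \subset T).
Proof.
move=> /eqP defT; apply/idP/idP => [|YT]; first exact: subset_trans (sub_span_set Y).
rewrite -defT; apply/subsetP => x; rewrite !inE; apply/subvP/sub_span => y.
by rewrite !mem_enum; apply/subsetP.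
Qed.

Lemma sdim_ltn_subspace k (U T : {set W k}) :
  is_subspace U -> is_subspace T -> U \subset T -> (U != T) = (sdim U < sdim T)%N.
Proof.
move=> /eqP defU /eqP defT UT.
have UTv : (span_of U <= span_of T)%VS.
  by apply: sub_span => y; rewrite !mem_enum; apply/subsetP.
rewrite /sdim (ltn_leqif (dimv_leqif_eq UTv)); congr (~~ _).
by apply/eqP/eqP => [->//|eqUT]; rewrite -defU -defT eqUT.
Qed.

Lemma powRD_ge0 (R : realType) (x r s : R) :
  0 <= r -> 0 <= s -> x `^ (r + s) = x `^ r * x `^ s.
Proof.
move=> r0 s0; have [rs0|rsn0] := eqVneq (r + s) 0; last first.
  by apply: powRD; rewrite (negPf rsn0).
move/eqP: rs0; rewrite paddr_eq0 // => /andP[/eqP -> /eqP ->].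
by rewrite addr0 powRr0 mulr1.
Qed.

Lemma powR_sum (R : realType) (x : R) (I : finType) (P : pred I) (F : I -> R) :
  (forall i, P i -> 0 <= F i) ->
  x `^ (\sum_(i | P i) F i) = \prod_(i | P i) x `^ F i.
Proof.
move=> F0; suff [] : 0 <= \sum_(i | P i) F i /\
                     x `^ (\sum_(i | P i) F i) = \prod_(i | P i) x `^ F i by [].
apply: (big_rec2 (fun s p => 0 <= s /\ x `^ s = p)); first by rewrite powRr0.
move=> i s p Pi [s0 <-]; split; first by rewrite addr_ge0 ?F0.
by rewrite powRD_ge0 ?F0.
Qed.

Lemma sum_ord_level (V : nmodType) (I : finType) (m : nat) (P : pred I)
    (d : I -> nat) (F : I -> V) :
  \sum_(j < m) \sum_(i | P i && (d i == j)) F i = \sum_(i | P i && (d i < m)%N) F i.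
Proof.
rewrite (exchange_big_dep P) => [|_ i _ /andP[]//].
rewrite [RHS]big_mkcondr; apply: eq_bigr => i Pi.
have [dm|md] := ltnP (d i) m.
  by rewrite (big_pred1 (Ordinal dm)) // => j; rewrite Pi /= -val_eqE eq_sym.
rewrite big_pred0 // => j; rewrite Pi; apply/eqP => dij.
by move: (ltn_ord j); rewrite -dij ltnNge md.
Qed.

Section BernoulliWeight.
Variables (R : comPzRingType) (X : finType) (a : X -> R).

Definition bernoulli_weight (Y : {set X}) : R :=
  \prod_x (if x \in Y then 1 - a x else a x).

Lemma sum_bernoulli_weight_subset (T : {set X}) :
  \sum_(Y : {set X} | Y \subset T) bernoulli_weight Y = \prod_(x in ~: T) a x.
Proof.
have expand_prod :=
  @bigA_distr R 0 1 *%R +%R X (fun x => if x \in T then 1 - a x else 0) a.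
have prod_split : \prod_x ((if x \in T then 1 - a x else 0) + a x) =
                  \prod_x (if x \in ~: T then a x else 1).
  by apply: eq_bigr => x _; rewrite inE; case: (x \in T); rewrite ?subrK ?add0r.
rewrite [RHS]big_mkcond -prod_split expand_prod [LHS]big_mkcond.
apply: eq_bigr => Y _; have [YT|] := boolP (Y \subset T).
  by apply: eq_bigr => x _; case: ifP => // xY; rewrite (subsetP YT).
by case/subsetPn => x xY xT; rewrite (bigD1 x) //= xY (negPf xT) mul0r.
Qed.

End BernoulliWeight.

Lemma bernoulli_weight_ge0 (R : numDomainType) (X : finType) (a : X -> R) Y :
  (forall x, 0 <= a x <= 1) -> 0 <= bernoulli_weight a Y.
Proof.
move=> a01; apply: prodr_ge0 => x _; have /andP[a0 a1] := a01 x.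
by case: ifP; rewrite ?subr_ge0.
Qed.

Section PsiAsSpanWeight.
Variables (R : realType) (k n : nat) (eps : R) (q : 'I_(2 ^ k) -> R).
Hypotheses (eps_ge0 : 0 <= eps) (eps_lt1 : eps < 1).
Hypotheses (q_ge0 : forall i, 0 <= q i) (q_sum1 : \sum_(i < 2 ^ k) q i = 1).

Definition point_weight (x : W k) : R :=
  eps `^ (n%:R * \sum_(i < 2 ^ k | nu k i == x) q i).

Definition span_weight (U : {set W k}) : R :=
  \sum_(Y | span_set Y == U) bernoulli_weight point_weight Y.

Lemma point_weight_ge0_le1 x : 0 <= point_weight x <= 1.
Proof.
rewrite /point_weight; set e := n%:R * _; have <- : 1 `^ e = 1 :> R by rewrite powR1.
by rewrite powR_ge0 ge0_ler_powR ?nnegrE ?(ltW eps_lt1) ?mulr_ge0 ?sumr_ge0.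
Qed.

Lemma span_weight_ge0 U : 0 <= span_weight U.
Proof.
by apply: sumr_ge0 => Y _; apply: bernoulli_weight_ge0 point_weight_ge0_le1.
Qed.

Lemma phi_prod_point_weight T : phi n eps q T = \prod_(x in ~: T) point_weight x.
Proof.
rewrite /point_weight -powR_sum => [|x _]; last by rewrite mulr_ge0 ?sumr_ge0.
rewrite -big_distrr /=; congr (_ `^ (_ * _)).
rewrite /zeta -q_sum1 (bigID (fun i : 'I_(2 ^ k) => nu k i \in T)) /= addrC addrK.
rewrite (partition_big (fun i : 'I_(2 ^ k) => nu k i) (mem (~: T))); last first.
  by move=> i; rewrite !inE.
apply: eq_bigr => x; rewrite !inE => xT.
by apply: eq_bigl => i; rewrite andb_idl // => /eqP ->.
Qed.

Lemma phi_sum_span_weight T : is_subspace T ->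
  phi n eps q T = \sum_(U | is_subspace U && (U \subset T)) span_weight U.
Proof.
move=> sT; rewrite phi_prod_point_weight -sum_bernoulli_weight_subset.
rewrite (eq_bigl (fun Y => span_set Y \subset T)) => [|Y]; last by rewrite span_set_sub.
rewrite (partition_big (@span_set k) (fun U => is_subspace U && (U \subset T))); last first.
  by move=> Y YT; rewrite span_set_subspace.
apply: eq_bigr => U /andP[_ UT]; apply: eq_bigl => Y.
by rewrite andb_idl // => /eqP ->.
Qed.

Lemma phi_span_weight_proper T : is_subspace T ->
  phi n eps q T = span_weight T +
    \sum_(U | is_subspace U && (U \subset T) && (sdim U < sdim T)%N) span_weight U.
Proof.
move=> sT; rewrite phi_sum_span_weight // (bigD1 T) ?sT ?subxx //=.
congr (_ + _); apply: eq_bigl => U.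
have [sU|] := boolP (is_subspace U); have [UT|] := boolP (U \subset T) => //=.
by rewrite sdim_ltn_subspace.
Qed.

Lemma psi_fuel_span_weight f T :
  is_subspace T -> (sdim T <= f)%N -> psi_fuel n eps q f T = span_weight T.
Proof.
elim: f T => [|f IHf] T sT dimT /=; rewrite phi_span_weight_proper //.
  by rewrite big_pred0 ?addr0 // => U; move: dimT; rewrite leqn0 => /eqP ->; rewrite andbF.
rewrite -sum_ord_level [X in _ - X](eq_bigr (fun j : 'I_(sdim T) =>
  \sum_(U | is_subspace U && (U \subset T) && (sdim U == j)) span_weight U)) ?addrK //.
move=> j _; apply: eq_big => [U|U /andP[/andP[sU /eqP dimU] _]]; first by rewrite andbAC.
by apply: IHf; rewrite // dimU -ltnS (leq_trans (ltn_ord j) dimT).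
Qed.

Lemma psi_span_weight T : is_subspace T -> psi n eps q T = span_weight T.
Proof. by move=> sT; apply: psi_fuel_span_weight. Qed.

End PsiAsSpanWeight.

Theorem lemma1 (R : realType) (k n : nat) (eps : R) (q : 'I_(2 ^ k) -> R) :
  (1 <= k)%N -> (1 <= n)%N -> 0 <= eps -> eps < 1 ->
  (forall i, 0 <= q i) -> \sum_(i < 2 ^ k) q i = 1 ->
  forall S : {set 'rV['F_2]_k}, is_subspace S -> 0 <= psi n eps q S.
Proof.
move=> _ _ eps_ge0 eps_lt1 q_ge0 q_sum1 S sS.
by rewrite psi_span_weight // span_weight_ge0.
Qed.
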